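(* Let $X$ be an irreducible positive recurrent Markov chain on a countable state space $S$ with transition matrix $P$ and stationary distribution $\pi$. Fix a finite nonempty set $K\subseteq S$ and a sequence $(A_n:n\ge1)$ of finite subsets of $S$ with $A_n\supseteq K$ and $A_n\nearrow S$. For each $n$, with $T_n=\inf\{j\ge1:X_j\notin A_n\}$, let $G_n(x,y)=P_x(X_{T_K}=y,\,T_K<T_n)$ for $x,y\in K$, and assume $G_n$ is irreducible. Define two stochastic matrices on $K$: (1) (Perron–Frobenius) Let $\lambda_n>0$ be the Perron eigenvalue of $G_n$ with positive left and right eigenvectors $\nu_n,h_n$ normalized so that $\sum_{x\in K}\nu_n(x)h_n(x)=1$; set $P_{1,n}(x,y)=G_n(x,y)h_n(y)/(\lambda_n h_n(x))$, whose unique stationary distribution is $\pi_{1,n}(x)=\nu_n(x)h_n(x)$. (2) (Row normalization) Set $P_{2,n}(x,y)=G_n(x,y)/\sum_{y'\in K}G_n(x,y')$, with unique stationary distribution $\pi_{2,n}$. For a non-negative function $r:S\to[0,\infty)$ and $i=1,2$ define $$\tilde\pi_{i,n}(r)=\frac{E_{\pi_{i,n}}\sum_{j=0}^{(T_n\wedge T_K)-1}r(X_j)}{E_{\pi_{i,n}}(T_n\wedge T_K)}.$$ Then $\tilde\pi_{i,n}(r)\to\pi r=\sum_{x\in S}\pi(x)r(x)$ as $n\to\infty$, for $i=1,2$.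
   Context: $P_x,E_x$ denote probability and expectation for the chain started at $x$, and $E_\mu=\sum_x\mu(x)E_x$. $T_K=\inf\{j\ge1:X_j\in K\}$, and $a\wedge b=\min(a,b)$. *)

From HB Require Import structures.
From mathcomp Require Import all_boot all_order all_algebra.
From mathcomp Require Import all_classical all_reals all_analysis.
Set Implicit Arguments. Unset Strict Implicit. Unset Printing Implicit Defensive.
Import Order.TTheory GRing.Theory Num.Theory.
Local Open Scope classical_set_scope.
Local Open Scope ring_scope.

Section MC.
Variables (R : realType) (S : countType).
Implicit Types (P : S -> S -> R) (x y : S) (s : seq S).

(* Weight P(x,x1) P(x1,x2) ... P(x_{m-1},x_m) of the finite path x :: s,
   i.e. P_x(X_1 = x1, ..., X_m = x_m). *)
Fixpoint pathw P x s : R :=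
  if s is y :: s' then P x y * pathw P y s' else 1.

Definition stochastic P :=
  (forall x y, 0 <= P x y) /\ (forall x, (\esum_(y in [set: S]) (P x y)%:E = 1)%E).

Definition irreducible P :=
  forall x y, exists s, last x s = y /\ 0 < pathw P x s.

(* E_x T_x = sum_{m>=0} P_x(T_x > m), with T_x = inf{j>=1 : X_j = x} *)
Definition return_time_exp P x : \bar R :=
  \esum_(s in [set s : seq S | forall z, z \in s -> z != x]) (pathw P x s)%:E.

Definition positive_recurrent P := forall x, (return_time_exp P x < +oo)%E.

Definition stationary_distribution P (pi : S -> R) :=
  (forall x, 0 <= pi x) /\ (\esum_(x in [set: S]) (pi x)%:E = 1)%E /\
  (forall y, \esum_(x in [set: S]) (pi x * P x y)%:E = (pi y)%:E).

Definition avoid_paths (B K : set S) := [set s : seq S | forall z, z \in s -> z \in B `\` K].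

(* G_B(x,y) = P_x(X_{T_K} = y, T_K < T_B), T_B = inf{j>=1 : X_j \notin B};
   the event is the disjoint union of the cylinders
   {X_1..X_m in B\K, X_{m+1} = y}, m >= 0 (y in K, K `<=` B). *)
Definition Gker P (B K : set S) x y : \bar R :=
  \esum_(s in avoid_paths B K) (pathw P x (rcons s y))%:E.

Definition Gmat P B K x y : R := fine (Gker P B K x y).

Definition irreducible_on (K : set S) (G : S -> S -> R) :=
  forall x y, K x -> K y -> exists s : seq S,
    s != [::] /\ (forall z, z \in s -> K z) /\ last x s = y /\
    0 < pathw G x s.

(* E_x sum_{j=0}^{(T_B /\ T_K)-1} r(X_j)
   = sum_{m>=0} E_x[ r(X_m) ; X_1..X_m in B\K ] *)
Definition killed_exp P (B K : set S) (r : S -> R) x : \bar R :=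
  \esum_(s in avoid_paths B K) (pathw P x s * r (last x s))%:E.

Definition tilde_pi P (B K : set S) (mu : S -> R) (r : S -> R) : \bar R :=
  ((\esum_(x in K) (mu x)%:E * killed_exp P B K r x) /
   (\esum_(x in K) (mu x)%:E * killed_exp P B K (fun _ => 1%R) x))%E.

Definition P2mat P B K x y : R :=
  Gmat P B K x y / fine (\esum_(y' in K) Gker P B K x y').

Definition stationary_on (K : set S) (Q : S -> S -> R) (mu : S -> R) :=
  (forall x, K x -> 0 <= mu x) /\ (\esum_(x in K) (mu x)%:E = 1)%E /\
  (forall y, K y -> \esum_(x in K) (mu x * Q x y)%:E = (mu y)%:E).

End MC.

From HB Require Import structures.
From mathcomp Require Import all_boot all_order all_algebra.
From mathcomp Require Import all_classical all_reals all_analysis.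
Import Order.TTheory GRing.Theory Num.Theory.
Import numFieldNormedType.Exports.
Local Open Scope classical_set_scope.
Local Open Scope ring_scope.

(* Let G(x, y) = P_x(X_{T_K} = y) be the chain watched on K.  Positive
   recurrence makes G stochastic, and the cycle formula
     sum_(x in K) pi(x) E_x sum_(j < T_K) r(X_j) = pi r,
   proved by showing that the pre-T_K occupation measure started from pi on K
   is dominated by pi, invariant, hence equal to pi, shows that pi_K = pi / pi(K)
   restricted to K is the stationary law of G.  By monotone convergence G_n
   increases to G and the truncated excursion sums to their untruncated
   values.  Both nu_n h_n (the Perron eigenvectors of G_n, rescaled) and
   pi_{2,n} are eigenvectors of matrices converging to the irreducible G, with
   eigenvalues tending to 1; pairing them with solutions of the Poisson
   equation for G shows that they converge to pi_K.  So numerator and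
   denominator of tilde pi_{i,n}(r) tend to pi r / pi(K) and 1 / pi(K). *)

Set Implicit Arguments. Unset Strict Implicit. Unset Printing Implicit Defensive.

Section esum_nonneg.
Context {R : realType} {T : choiceType}.
Implicit Types (A B D : set T) (f g : T -> \bar R).
Local Open Scope ereal_scope.

Lemma le_esum_subset A B f : A `<=` B -> (forall t, B t -> 0 <= f t) ->
  \esum_(t in A) f t <= \esum_(t in B) f t.
Proof.
move=> AB f0; apply: ge_ereal_sup => _ [X [finX XA] <-].
by apply: ereal_sup_ubound; exists X => //; split => //; exact: subset_trans XA AB.
Qed.

Lemma esum_ge_term D f t : D t -> (forall t, D t -> 0 <= f t) ->
  f t <= \esum_(i in D) f i.
Proof.
move=> Dt f0; apply: esum_ge; exists [set t]; first by split => // x ->.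
by rewrite fsbig_set1.
Qed.

Lemma esumZl D (c : R) f : (0 <= c)%R -> (forall t, D t -> 0 <= f t) ->
  \esum_(t in D) (c%:E * f t) = c%:E * \esum_(t in D) f t.
Proof.
move=> c0 f0.
have sumZ X : fsets D X -> \sum_(i \in X) (c%:E * f i) = c%:E * \sum_(i \in X) f i.
  move=> [finX XD]; rewrite !fsbig_finite// big_seq [in RHS]big_seq.
  by rewrite ge0_sume_distrr// => i; rewrite in_fset_set// inE => /XD /f0.
rewrite /esum -ereal_supZl//; last first.
  by apply/set0P; exists 0; exists set0; [exact: fsets_set0|rewrite fsbig_set0].
congr ereal_sup; apply/seteqP; split => y.
  by move=> [X DX <-]; exists (\sum_(i \in X) f i); [exists X|rewrite sumZ].
by move=> [_ [X DX <-] <-]; exists X; rewrite ?sumZ.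
Qed.

Lemma esumZr D (c : R) f : (0 <= c)%R -> (forall t, D t -> 0 <= f t) ->
  \esum_(t in D) (f t * c%:E) = (\esum_(t in D) f t) * c%:E.
Proof. by move=> c0 f0; rewrite muleC -esumZl//; apply: eq_esum => t _; exact: muleC. Qed.

Lemma esum_fibers (U : choiceType) D (g : T -> U) f :
  (forall t, D t -> 0 <= f t) ->
  \esum_(u in [set: U]) \esum_(t in [set t | D t /\ g t = u]) f t =
  \esum_(t in D) f t.
Proof.
move=> f0; rewrite esum_esum; last by move=> u t _ [/f0].
rewrite (reindex_esum D _ (fun t => (g t, t))) //; split.
- by move=> t Dt /=; split.
- by move=> t1 t2 _ _ [].
- by move=> [u t] /= [_ [Dt <-]]; exists t.
Qed.

Lemma exchange_esum (U : choiceType) (I : set T) (J : set U)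
    (a : T -> U -> \bar R) :
  (forall i j, I i -> J j -> 0 <= a i j) ->
  \esum_(i in I) \esum_(j in J) a i j = \esum_(j in J) \esum_(i in I) a i j.
Proof.
move=> a0; rewrite !esum_esum; [|by move=> *; apply: a0|by move=> *; apply: a0].
rewrite (reindex_esum (I `*` J) (J `*` I) (fun p => (p.2, p.1))) //; split.
- by move=> [i j] [/= Ii Jj].
- by move=> [i1 j1] [i2 j2] _ _ [-> ->].
- by move=> [j i] [/= Jj Ii]; exists (i, j).
Qed.

Lemma esum_le_eq_term D f g t :
  (forall t, D t -> 0 <= f t) -> (forall t, D t -> f t <= g t) ->
  \esum_(i in D) g i = \esum_(i in D) f i -> \esum_(i in D) f i < +oo ->
  D t -> g t = f t.
Proof.
move=> f0 fg eqfg finf Dt.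
have g0 i : D i -> 0 <= g i by move=> Di; exact: le_trans (f0 _ Di) (fg _ Di).
have Dt1 : D `&` [set t] = [set t] by apply/seteqP; split=> [x [] //|x ->].
have := esumID [set t] D f f0; have := esumID [set t] D g g0.
rewrite Dt1 esum_set1 ?g0// esum_set1 ?f0// eqfg => -> eqf.
set X := \esum_(i in D `&` ~` [set t]) f i.
have Xfin : X \is a fin_num.
  rewrite ge0_fin_numE; last by apply: esum_ge0 => i [/f0].
  by apply: le_lt_trans finf; apply: le_esum_subset => // i [].
have : g t + X <= f t + X.
  by rewrite -eqf; apply: leeD2l; apply: le_esum => i [Di _]; exact: fg.
by rewrite leeD2rE// => gf; apply/eqP; rewrite eq_le gf fg.
Qed.

End esum_nonneg.

Section esum_nondecreasing.
Context {R : realType}.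
Local Open Scope ereal_scope.

Lemma nondecreasing_setsP (T : Type) (F : nat -> set T) :
  (forall n, F n `<=` F n.+1) -> {homo F : m n / (m <= n)%N >-> m `<=` n}.
Proof.
exact: homo_leq (fun _ => @subset_refl _ _) (fun _ _ _ => @subset_trans _ _ _ _).
Qed.

Lemma nondecreasing_cover_seq (T : eqType) (F : nat -> set T) (s : seq T) :
  (forall n, F n `<=` F n.+1) -> (forall x, x \in s -> exists n, F n x) ->
  exists n, forall x, x \in s -> F n x.
Proof.
move=> /nondecreasing_setsP Fle.
elim: s => [|y s IH] cov; first by exists 0%N.
have [n1 Fy] := cov y (mem_head _ _).
have [n2 Fs] := IH (fun x xs => cov x (mem_behead (s := y :: s) xs)).
exists (maxn n1 n2) => x; rewrite inE => /predU1P[->|xs].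
  exact: Fle (leq_maxl n1 n2) _ Fy.
exact: Fle (leq_maxr n1 n2) _ (Fs _ xs).
Qed.

Lemma esum_bigcup_nondecreasing (T : choiceType) (F : nat -> set T)
    (f : T -> \bar R) :
  (forall n, F n `<=` F n.+1) -> (forall t, 0 <= f t) ->
  \esum_(t in \bigcup_n F n) f t = ereal_sup (range (fun n => \esum_(t in F n) f t)).
Proof.
move=> Fle f0; apply/eqP; rewrite eq_le; apply/andP; split.
  apply: ge_ereal_sup => _ [X [finX XF] <-].
  have [fs Xfs] := finite_fsetP.1 finX.
  have [n Fn] : exists n, forall x, x \in finmap.enum_fset fs -> F n x.
    apply: nondecreasing_cover_seq => // x xs.
    have Xx : X x by rewrite Xfs.
    by have [n _ Fnx] := XF x Xx; exists n.
  apply: le_trans (_ : \esum_(t in F n) f t <= _).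
    by apply: ereal_sup_ubound; exists X => //; split => // x; rewrite Xfs; exact: Fn.
  by apply: ereal_sup_ubound; exists n.
apply: ge_ereal_sup => _ [n _ <-]; apply: le_esum_subset => //.
exact: bigcup_sup.
Qed.

Lemma esum_bigcup_nondecreasing_cvg (T : choiceType) (F : nat -> set T)
    (f : T -> \bar R) :
  (forall n, F n `<=` F n.+1) -> (forall t, 0 <= f t) ->
  \esum_(t in F n) f t @[n --> \oo] --> \esum_(t in \bigcup_n F n) f t.
Proof.
move=> Fle f0; rewrite esum_bigcup_nondecreasing//.
apply: ereal_nondecreasing_cvgn => m n mn; apply: le_esum_subset => //.
exact: nondecreasing_setsP.
Qed.

End esum_nondecreasing.

Section path_weight.
Context {R : realType} {S : countType}.
Implicit Types (P Q : S -> S -> R) (D : set S).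

Lemma pathw_rcons P x s y : pathw P x (rcons s y) = pathw P x s * P (last x s) y.
Proof. by elim: s x => [|z s IH] x /=; rewrite ?mul1r ?mulr1 ?IH ?mulrA. Qed.

Lemma pathw_le_in D P Q x s :
  (forall a b, D a -> D b -> 0 <= P a b <= Q a b) -> D x ->
  (forall z, z \in s -> D z) -> 0 <= pathw P x s <= pathw Q x s.
Proof.
move=> PQ; elim: s x => [|z s IH] x Dx sD /=; first by rewrite ler01 lexx.
have [Dz Ds] : D z /\ forall w, w \in s -> D w.
  by split => [|w ws]; apply: sD; rewrite inE ?eqxx ?ws ?orbT.
have /andP[Pxz0 PQxz] := PQ x z Dx Dz; have /andP[w0 PQw] := IH z Dz Ds.
by rewrite mulr_ge0 ?ler_pM.
Qed.

Lemma pathw_ge0_in D P x s : (forall a b, D a -> D b -> 0 <= P a b) -> D x ->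
  (forall z, z \in s -> D z) -> 0 <= pathw P x s.
Proof.
move=> P0 Dx sD; have PP a b : D a -> D b -> 0 <= P a b <= P a b.
  by move=> Da Db; rewrite lexx andbT P0.
by have /andP[] := pathw_le_in PP Dx sD.
Qed.

Lemma pathw_ge0 P x s : (forall a b, 0 <= P a b) -> 0 <= pathw P x s.
Proof. by move=> P0; apply: (@pathw_ge0_in setT) => // *; exact: P0. Qed.

Lemma pathw_cons_gt0 P x z s : 0 <= P x z -> 0 <= pathw P z s ->
  0 < pathw P x (z :: s) -> 0 < P x z /\ 0 < pathw P z s.
Proof.
move=> Pxz0 w0 /=; rewrite lt_def => /andP[]; rewrite mulf_eq0 negb_or.
by move=> /andP[Pxz w] _; rewrite !lt_def Pxz w Pxz0 w0.
Qed.

End path_weight.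

Section excursions.
Context {R : realType} {S : countType} (P : S -> S -> R) (K : set S) (pi : S -> R).
Hypothesis P0 : forall x y, 0 <= P x y.
Hypothesis pi0 : forall x, 0 <= pi x.
Hypothesis pi_stat : forall y, (\esum_(x in [set: S]) (pi x * P x y)%:E = (pi y)%:E)%E.
Local Open Scope ereal_scope.

Implicit Types (c : pred nat).

Local Notation outK := (avoid_paths [set: S] K).
Local Notation G := (Gker P [set: S] K).

Lemma outKP s : outK s <-> (forall z, z \in s -> ~ K z).
Proof.
split => H z zs; last by rewrite in_setE; split => //; exact: H.
by move: (H z zs); rewrite in_setE => -[].
Qed.

Lemma outK_nil : outK [::].
Proof. by apply/outKP. Qed.

Lemma outK_rcons s y : outK (rcons s y) <-> outK s /\ ~ K y.
Proof.
rewrite !outKP; split => [H|[H Ky] z].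
  by split => [z zs|]; apply: H; rewrite mem_rcons inE ?zs ?orbT ?eqxx.
by rewrite mem_rcons inE => /predU1P[->|] //; exact: H.
Qed.

Lemma outK_last x s : outK s -> s != [::] -> ~ K (last x s).
Proof.
case/lastP: s => [//|s z] /outK_rcons[_ Kz] _.
by rewrite last_rcons.
Qed.

Lemma EFin_pathw_ge0 x s : 0 <= (pathw P x s)%:E.
Proof. by rewrite lee_fin pathw_ge0. Qed.

(* A pair (x, s) encodes the excursion x :: s of the chain started in K and
   kept outside K; c restricts its length. *)
Definition excursions (c : pred nat) :=
  [set p : S * seq S | [/\ K p.1, outK p.2 & c (size p.2)]].

Definition excursion_weight (p : S * seq S) : R := pi p.1 * pathw P p.1 p.2.

(* For c = xpredT this is sum_(x in K) pi(x) E_x #{0 <= j < T_K : X_j = y}. *)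
Definition occupation (c : pred nat) y :=
  \esum_(p in [set p | excursions c p /\ last p.1 p.2 = y]) (excursion_weight p)%:E.

Lemma excursions_all : excursions xpredT = K `*`` (fun _ => outK).
Proof. by apply/seteqP; split => -[x s] => [[Kx outs _]|[Kx outs]]. Qed.

Lemma excursion_weight_ge0 p : (0 <= excursion_weight p)%R.
Proof. exact: mulr_ge0 (pi0 _) (pathw_ge0 _ _ P0). Qed.

Lemma occupation_ge0 c y : 0 <= occupation c y.
Proof. by apply: esum_ge0 => p _; rewrite lee_fin excursion_weight_ge0. Qed.

Lemma occupation_K c y : K y -> c 0%N -> occupation c y = (pi y)%:E.
Proof.
move=> Ky c0; rewrite /occupation.
have -> : [set p | excursions c p /\ last p.1 p.2 = y] = [set (y, [::])].
  apply/seteqP; split => [[x s] /= [[Kx outs _] lst]|[x s] /= [-> ->]]; last first.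
    by split => //; split => //; exact: outK_nil.
  case: (eqVneq s [::]) => [sn|sn]; first by move: lst; rewrite sn /= => ->.
  by case: (outK_last (x := x) outs sn); rewrite lst.
by rewrite esum_set1 ?lee_fin ?excursion_weight_ge0// /excursion_weight mulr1.
Qed.

Lemma esum_occupation_mulP c y :
  \esum_(z in [set: S]) (occupation c z * (P z y)%:E) =
  \esum_(p in excursions c) ((excursion_weight p * P (last p.1 p.2) y)%R)%:E.
Proof.
rewrite -(esum_fibers (fun p : S * seq S => last p.1 p.2)); last first.
  by move=> p _; rewrite lee_fin mulr_ge0 // excursion_weight_ge0.
apply: eq_esum => z _; rewrite /occupation -esumZr //; last first.
  by move=> p _; rewrite lee_fin excursion_weight_ge0.
by apply: eq_esum => p [_ /= ->].
Qed.

Lemma occupation_notK c y : ~ K y ->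
  occupation c y = \esum_(z in [set: S]) (occupation (fun k => c k.+1) z * (P z y)%:E).
Proof.
move=> Ky; rewrite esum_occupation_mulP /occupation.
rewrite (reindex_esum (excursions (fun k => c k.+1)) _ (fun p => (p.1, rcons p.2 y))).
  by apply: eq_esum => -[x s] _; rewrite /excursion_weight /= pathw_rcons mulrA.
split.
- move=> [x s] /= [Kx outs cs]; split; last exact: last_rcons.
  by split => //=; [exact/outK_rcons | rewrite size_rcons].
- by move=> [x1 s1] [x2 s2] _ _ /= [-> /rcons_inj [->]].
- move=> [x s] [[/= Kx outs cs] lst].
  case/lastP: s outs cs lst => [|s z] outs cs lst; first by rewrite -lst in Ky.
  move: lst outs cs; rewrite last_rcons size_rcons => -> /outK_rcons[outs _] cs.
  by exists (x, s).
Qed.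

Lemma occupation_trunc_le m y : occupation (fun k => k <= m)%N y <= (pi y)%:E.
Proof.
elim: m y => [|m IH] y; (have [Ky|Ky] := pselect (K y); first by rewrite occupation_K).
  rewrite occupation_notK // esum1 ?lee_fin // => z _.
  by rewrite /occupation esum1 ?mul0e // => -[x s] [[]].
rewrite occupation_notK // -pi_stat; apply: le_esum => z _; rewrite EFinM.
by apply: lee_wpmul2r; [rewrite lee_fin|exact: IH].
Qed.

Lemma occupation_le y : occupation xpredT y <= (pi y)%:E.
Proof.
rewrite /occupation.
have -> : [set p | excursions xpredT p /\ last p.1 p.2 = y] =
    \bigcup_m [set p | excursions (fun k => k <= m)%N p /\ last p.1 p.2 = y].
  apply/seteqP; split => [[x s] [[Kx outs _] lst]|[x s] [m _ [[Kx outs _] lst]]] //.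
  by exists (size s) => //.
rewrite esum_bigcup_nondecreasing; first last.
- by move=> p; rewrite lee_fin excursion_weight_ge0.
- by move=> m [x s] [[Kx outs sm] lst]; split => //; split => //; exact: leqW.
by apply: ge_ereal_sup => _ [m _ <-]; exact: occupation_trunc_le.
Qed.

Lemma occupation_fin y : occupation xpredT y \is a fin_num.
Proof.
rewrite ge0_fin_numE ?occupation_ge0 //.
by apply: le_lt_trans (occupation_le y) _; rewrite ltry.
Qed.

Lemma esum_occupation_mulP_trace y :
  \esum_(z in [set: S]) (occupation xpredT z * (P z y)%:E) =
  \esum_(x in K) ((pi x)%:E * G x y).
Proof.
transitivity (\esum_(x in K) \esum_(s in outK) ((pi x * pathw P x (rcons s y))%R)%:E).
  rewrite esum_occupation_mulP esum_esum; last first.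
    by move=> x s _ _; rewrite lee_fin mulr_ge0 ?pathw_ge0.
  rewrite excursions_all; apply: eq_esum => -[x s] _.
  by rewrite /excursion_weight /= pathw_rcons mulrA.
by apply: eq_esum => x Kx; rewrite -esumZl //; move=> *; exact: EFin_pathw_ge0.
Qed.

Hypothesis P_row : forall x, \esum_(y in [set: S]) (P x y)%:E = 1.

Lemma esum_outK_split_nil x :
  \esum_(s in outK) (pathw P x s)%:E =
  1 + \esum_(s in outK `&` ~` [set [::]]) (pathw P x s)%:E.
Proof.
rewrite (esumID [set [::]]); last by move=> *; exact: EFin_pathw_ge0.
have -> : outK `&` [set [::]] = [set [::]].
  by apply/seteqP; split => [s [] //|s ->]; split => //; exact: outK_nil.
by rewrite esum_set1 ?EFin_pathw_ge0.
Qed.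

Lemma esum_outK_split_last x :
  \esum_(s in outK) (pathw P x s)%:E =
  \esum_(y in K) G x y + \esum_(s in outK `&` ~` [set [::]]) (pathw P x s)%:E.
Proof.
transitivity (\esum_(s in outK) \esum_(y in [set: S]) (pathw P x (rcons s y))%:E).
  apply: eq_esum => s _; under eq_esum do rewrite pathw_rcons EFinM.
  by rewrite esumZl ?P_row ?mule1 ?pathw_ge0// => y _; rewrite lee_fin.
rewrite esum_esum; last by move=> *; exact: EFin_pathw_ge0.
rewrite (esumID [set q : seq S * S | K q.2]); last by move=> *; exact: EFin_pathw_ge0.
congr (_ + _).
  rewrite exchange_esum; last by move=> *; exact: EFin_pathw_ge0.
  rewrite esum_esum; last by move=> *; exact: EFin_pathw_ge0.
  by congr esum; apply/seteqP; split => -[s y] /=; [move=> [[]]|move=> []].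
rewrite (reindex_esum (outK `*`` (fun _ => [set: S]) `&` ~` [set q | K q.2])
   (outK `&` ~` [set [::]]) (fun q => rcons q.1 q.2)) //.
split.
- move=> [s y] /= [[outs _] Ky]; split; first exact/outK_rcons.
  by move=> /= /(congr1 size); rewrite size_rcons.
- by move=> [s1 y1] [s2 y2] _ _ /= /rcons_inj [-> ->].
- move=> s [outs sn]; case/lastP: s outs sn => [|s z] outs sn; first by case: sn.
  by move/outK_rcons: outs => [outs Kz]; exists (s, z).
Qed.

(* The left-hand sides of the two splittings are E_x T_K; once it is finite,
   the common term cancels. *)
Lemma trace_stochastic x : \esum_(s in outK) (pathw P x s)%:E < +oo ->
  \esum_(y in K) G x y = 1.
Proof.
move=> ETK; set B := \esum_(s in outK `&` ~` [set [::]]) (pathw P x s)%:E.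
have Bfin : B \is a fin_num.
  rewrite ge0_fin_numE; last by apply: esum_ge0 => *; exact: EFin_pathw_ge0.
  by apply: le_lt_trans ETK; apply: le_esum_subset => [s []|*] //; exact: EFin_pathw_ge0.
have := esum_outK_split_last x; rewrite esum_outK_split_nil -/B.
by move=> /(congr1 (fun z => z - B)); rewrite !addeK.
Qed.

Lemma trace_ge0 x y : 0 <= G x y.
Proof. by apply: esum_ge0 => *; exact: EFin_pathw_ge0. Qed.

Hypothesis P_rec : positive_recurrent P.

Lemma excursion_length_fin x : K x -> \esum_(s in outK) (pathw P x s)%:E < +oo.
Proof.
move=> Kx; apply: le_lt_trans (P_rec x); apply: le_esum_subset => [s|*].
  by move=> /outKP outs z /outs; apply: contra_notN => /eqP ->.
exact: EFin_pathw_ge0.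
Qed.

Lemma trace_row x : K x -> \esum_(y in K) G x y = 1.
Proof. by move=> Kx; exact/trace_stochastic/excursion_length_fin. Qed.

Hypothesis pi_sum1 : \esum_(x in [set: S]) (pi x)%:E = 1.

Lemma trace_stationary y : K y -> \esum_(x in K) ((pi x)%:E * G x y) = (pi y)%:E.
Proof.
have piG0 x y' : 0 <= (pi x)%:E * G x y' by rewrite mule_ge0 ?lee_fin ?trace_ge0.
have piK_piG : \esum_(y' in K) \esum_(x in K) ((pi x)%:E * G x y') =
    \esum_(x in K) (pi x)%:E.
  rewrite exchange_esum //; apply: eq_esum => x Kx.
  by rewrite esumZl ?trace_row ?mule1// => *; exact: trace_ge0.
move=> Ky; symmetry; apply: (@esum_le_eq_term _ _ K
  (fun y => \esum_(x in K) ((pi x)%:E * G x y)) (fun y => (pi y)%:E)) => //.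
- by move=> y' _; apply: esum_ge0.
- move=> y' _; rewrite -esum_occupation_mulP_trace -pi_stat.
  apply: le_esum => z _; rewrite EFinM.
  by apply: lee_wpmul2r; [rewrite lee_fin|exact: occupation_le].
- apply: le_lt_trans (_ : \esum_(x in [set: S]) (pi x)%:E < +oo).
    by rewrite piK_piG; apply: le_esum_subset => // *; rewrite lee_fin.
  by rewrite pi_sum1 ltry.
Qed.

Lemma occupation_invariant y :
  \esum_(z in [set: S]) (occupation xpredT z * (P z y)%:E) = occupation xpredT y.
Proof.
have [Ky|Ky] := pselect (K y); last by rewrite [RHS]occupation_notK.
by rewrite esum_occupation_mulP_trace trace_stationary // occupation_K.
Qed.

Hypothesis P_irr : irreducible P.

(* Walk back along a positive path from y to K: at each step, invariance of
   both measures and occupation <= pi force equality at the predecessor. *)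
Lemma occupation_eq_pi k y : K k -> occupation xpredT y = (pi y)%:E.
Proof.
move=> Kk; have [s [lst pos]] := P_irr y k.
elim: s y lst pos => [|z s IH] y /= lst pos; first by rewrite lst occupation_K.
have [Pyz pz] := pathw_cons_gt0 (P0 y z) (pathw_ge0 _ _ P0) pos.
have muP_le w : occupation xpredT w * (P w z)%:E <= ((pi w * P w z)%R)%:E.
  by rewrite EFinM; apply: lee_wpmul2r; [rewrite lee_fin|exact: occupation_le].
have := @esum_le_eq_term _ _ [set: S] (fun w => occupation xpredT w * (P w z)%:E)
   (fun w => ((pi w * P w z)%R)%:E) y.
rewrite pi_stat occupation_invariant IH // ltry => /(_ _ _ erefl erefl I) eq_y.
rewrite -(fineK (occupation_fin y)); congr EFin; apply: (mulIf (lt0r_neq0 Pyz)).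
apply: EFin_inj; rewrite EFinM fineK ?occupation_fin // eq_y //.
by move=> w _; rewrite mule_ge0 ?occupation_ge0 ?lee_fin.
Qed.

Lemma cycle_formula k (r : S -> R) : K k -> (forall x, (0 <= r x)%R) ->
  \esum_(x in K) ((pi x)%:E * killed_exp P [set: S] K r x) =
  \esum_(y in [set: S]) ((pi y * r y)%R)%:E.
Proof.
move=> Kk r0; have w0 x s : 0 <= ((pathw P x s * r (last x s))%R)%:E.
  by rewrite lee_fin mulr_ge0 ?pathw_ge0.
transitivity (\esum_(x in K) \esum_(s in outK)
    ((pi x * (pathw P x s * r (last x s)))%R)%:E).
  by apply: eq_esum => x Kx; rewrite -esumZl.
rewrite esum_esum; last by move=> *; rewrite lee_fin !mulr_ge0 ?pathw_ge0.
rewrite -excursions_all -(esum_fibers (fun p : S * seq S => last p.1 p.2)); last first.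
  by move=> *; rewrite lee_fin !mulr_ge0 ?pathw_ge0.
apply: eq_esum => y _; rewrite EFinM -(occupation_eq_pi y Kk) -esumZr //; last first.
  by move=> p _; rewrite lee_fin excursion_weight_ge0.
by apply: eq_esum => -[x s] [_ /= <-]; rewrite /excursion_weight mulrA.
Qed.

Lemma pi_path_le z s : (pi z * pathw P z s <= pi (last z s))%R.
Proof.
elim: s z => [|w s IH] z /=; first by rewrite mulr1.
apply: le_trans (IH w); rewrite mulrA ler_wpM2r ?pathw_ge0 //.
rewrite -lee_fin -pi_stat; apply: (esum_ge_term (D := [set: S])) => // *.
by rewrite lee_fin mulr_ge0.
Qed.

Lemma stationary_gt0 y : (0 < pi y)%R.
Proof.
have [z pz] : exists z, (0 < pi z)%R.
  apply: contrapT => pi_eq0; move: pi_sum1; rewrite esum1 => [[] /eqP|x _].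
    by rewrite eq_sym oner_eq0.
  congr EFin; apply/eqP; rewrite eq_le pi0 andbT leNgt.
  by apply/negP => ?; apply: pi_eq0; exists x.
have [s [lst pos]] := P_irr z y.
by rewrite -lst; apply: lt_le_trans (pi_path_le z s); exact: mulr_gt0.
Qed.

End excursions.

Section seq_sums.
Context {R : realFieldType} {T : eqType}.
Implicit Types (ks : seq T) (F : T -> R).

Lemma sum_seq_mul_delta ks F y : uniq ks -> y \in ks ->
  \sum_(x <- ks) F x * (x == y)%:R = F y.
Proof.
move=> ksu yk; rewrite (bigD1_seq y) //= eqxx mulr1 big1 ?addr0 // => x /negbTE ->.
by rewrite mulr0.
Qed.

Lemma ler_sum_term_seq ks F x : uniq ks -> x \in ks ->
  (forall y, y \in ks -> 0 <= F y) -> F x <= \sum_(y <- ks) F y.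
Proof.
move=> ksu xk F0; rewrite (bigD1_seq x) //= lerDl big_seq_cond sumr_ge0 //.
by move=> y /andP[yk _]; exact: F0.
Qed.

Lemma exists_argmax_seq ks F : ks != [::] ->
  exists2 x, x \in ks & forall y, y \in ks -> F y <= F x.
Proof.
elim: ks => [//|a s IH] _; case: (eqVneq s [::]) => [->|sn].
  by exists a => [|y]; rewrite ?inE ?eqxx // => /eqP ->.
have [b bs Hb] := IH sn; have [ab|ba] := leP (F a) (F b).
  by exists b => [|y]; rewrite inE ?bs ?orbT // => /predU1P[->|/Hb].
exists a => [|y]; rewrite inE ?eqxx // => /predU1P[->//|/Hb yb].
exact: le_trans yb (ltW ba).
Qed.

End seq_sums.

Section cvg_seq.
Context {R : realType}.
Implicit Types (a b : nat -> R).

(* [cvgB] and [cvgM] conclude about the pointwise operations [f - g] and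
   [f \* g], which [apply:] does not unify with [fun n => a n - b n]. *)
Lemma cvgB_seq a b (la lb : R) : a n @[n --> \oo] --> la ->
  b n @[n --> \oo] --> lb -> a n - b n @[n --> \oo] --> la - lb.
Proof. exact: cvgB. Qed.

Lemma cvgM_seq a b (la lb : R) : a n @[n --> \oo] --> la ->
  b n @[n --> \oo] --> lb -> a n * b n @[n --> \oo] --> la * lb.
Proof. exact: cvgM. Qed.

Lemma cvg_sum_seq (I : eqType) (r : seq I) (F : I -> nat -> R) (L : I -> R) :
  (forall i, i \in r -> F i n @[n --> \oo] --> L i) ->
  \sum_(i <- r) F i n @[n --> \oo] --> \sum_(i <- r) L i.
Proof.
move=> FL; rewrite big_seq; under eq_cvg do rewrite big_seq.
by apply: cvg_big => //; exact: add_continuous.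
Qed.

Lemma cvg_sum_seq0 (I : eqType) (r : seq I) (F : I -> nat -> R) :
  (forall i, i \in r -> F i n @[n --> \oo] --> 0) ->
  \sum_(i <- r) F i n @[n --> \oo] --> 0.
Proof. by move=> /cvg_sum_seq; rewrite big1. Qed.

Lemma cvg_bounded_mul0 a b (B : R) : (forall n, `|a n| <= B) ->
  b n @[n --> \oo] --> 0 -> a n * b n @[n --> \oo] --> 0.
Proof.
move=> aB b0; have Bb : B * `|b n| @[n --> \oo] --> (0 : R).
  rewrite -[X in _ --> X](mulr0 B) -[X in _ * X](@normr0 _ R).
  by apply: cvgM_seq; [exact: cvg_cst|exact: cvg_norm].
have mBb : - (B * `|b n|) @[n --> \oo] --> (0 : R).
  by rewrite -oppr0; exact: cvgN Bb.
apply: (squeeze_cvgr _ mBb Bb); apply: nearW => n.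
by rewrite -ler_norml normrM ler_wpM2r.
Qed.

End cvg_seq.

Section irreducible_stochastic_matrix.
Context {R : realType} {S : countType} (ks : seq S) (G : S -> S -> R) (p : S -> R).
Hypothesis ks_uniq : uniq ks.
Hypothesis G0 : forall x y, x \in ks -> y \in ks -> 0 <= G x y.
Hypothesis G_row : forall x, x \in ks -> \sum_(y <- ks) G x y = 1.
Hypothesis G_irr : forall x y, x \in ks -> y \in ks -> exists s : seq S,
  (forall z, z \in s -> z \in ks) /\ last x s = y /\ 0 < pathw G x s.
Hypothesis p_stat : forall y, y \in ks -> \sum_(x <- ks) p x * G x y = p y.
Hypothesis p_sum1 : \sum_(x <- ks) p x = 1.

Definition harmonic (U : S -> R) := forall x, x \in ks -> U x = \sum_(y <- ks) G x y * U y.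

Lemma harmonic_max_step (U : S -> R) x y : harmonic U -> x \in ks -> y \in ks ->
  (forall z, z \in ks -> U z <= U x) -> 0 < G x y -> U y = U x.
Proof.
move=> harmU xk yk Umax Gxy.
have : \sum_(z <- ks | z \in ks) G x z * (U x - U z) = 0.
  rewrite -big_seq; under eq_bigr do rewrite mulrBr.
  by rewrite sumrB -big_distrl /= G_row // mul1r -harmU // subrr.
move/eqP; rewrite psumr_eq0 => [|z zk]; last by rewrite mulr_ge0 ?G0 ?subr_ge0 ?Umax.
move=> /allP /(_ y yk); rewrite yk /= mulf_eq0 (gt_eqF Gxy) /= subr_eq0.
by move=> /eqP ->.
Qed.

(* Maximum principle: the maximum propagates along positive paths. *)
Lemma harmonic_const (U : S -> R) x y : harmonic U -> x \in ks -> y \in ks ->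
  U x = U y.
Proof.
move=> harmU xk yk.
have [m mk Umax] : exists2 m, m \in ks & forall z, z \in ks -> U z <= U m.
  by apply: exists_argmax_seq; apply: contraTneq xk => ->.
suff Um w : w \in ks -> U w = U m by rewrite !Um.
move=> wk; have [s [sk [<- pos]]] := G_irr mk wk.
elim: s m mk Umax sk pos => [//|z s IH] a ak Umax sk pos.
have zk : z \in ks by apply: sk; rewrite inE eqxx.
have sk' w' : w' \in s -> w' \in ks by move=> ws; apply: sk; rewrite inE ws orbT.
have [Gaz pz] := pathw_cons_gt0 (G0 ak zk) (pathw_ge0_in G0 zk sk') pos.
have Uz := harmonic_max_step harmU ak zk Umax Gaz.
have Umaxz w' : w' \in ks -> U w' <= U z by rewrite Uz; exact: Umax.
by rewrite /= (IH z zk).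
Qed.

Lemma stationary_sum_mul (U : S -> R) :
  \sum_(x <- ks) p x * (\sum_(y <- ks) G x y * U y) = \sum_(y <- ks) p y * U y.
Proof.
under eq_bigr do rewrite big_distrr /=.
rewrite exchange_big /= big_seq [RHS]big_seq; apply: eq_bigr => y yk.
by under eq_bigr do rewrite mulrA; rewrite -big_distrl /= p_stat.
Qed.

(* [I - G + 1 p] is injective: p-averaging kills I - G, so U is harmonic,
   hence constant, hence 0. *)
Lemma fundamental_ker0 (U : S -> R) :
  (forall x, x \in ks -> U x - \sum_(y <- ks) G x y * U y + \sum_(y <- ks) p y * U y = 0) ->
  forall x, x \in ks -> U x = 0.
Proof.
move=> kerU; set c := \sum_(y <- ks) p y * U y in kerU.
have c0 : c = 0.
  have : \sum_(x <- ks) p x * (U x - \sum_(y <- ks) G x y * U y + c) = 0.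
    by rewrite big_seq big1 // => x xk; rewrite kerU // mulr0.
  under eq_bigr do rewrite mulrDr mulrBr.
  by rewrite big_split sumrB /= stationary_sum_mul -big_distrl /= p_sum1 mul1r subrr add0r.
have harmU : harmonic U.
  by move=> x xk; have /eqP := kerU x xk; rewrite c0 addr0 subr_eq0 => /eqP.
move=> x xk; move: c0; rewrite /c big_seq.
under eq_bigr => y yk do rewrite (harmonic_const harmU yk xk).
by rewrite -big_seq -big_distrl /= p_sum1 mul1r.
Qed.

Section fundamental_matrix.
(* [x0] is only the default element of [nth]. *)
Variable x0 : S.
Local Notation k := (size ks).
Local Notation e := (fun i : 'I_(size ks) => nth x0 ks i).

Definition fundamental_mx : 'M[R]_k :=
  \matrix_(i, j) ((i == j)%:R - G (e i) (e j) + p (e j)).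

Lemma nth_ks_inj (i j : 'I_k) : e i = e j -> i = j.
Proof. by move=> /eqP; rewrite nth_uniq // => /eqP; exact: val_inj. Qed.

Lemma ks_nth x : x \in ks -> exists i : 'I_k, e i = x.
Proof.
by move=> xk; exists (Ordinal (etrans (index_mem x ks) xk)); rewrite /= nth_index.
Qed.

Definition fun_of_vec (w : 'I_k -> R) (x : S) := \sum_j (x == e j)%:R * w j.

Lemma fun_of_vec_nth w i : fun_of_vec w (e i) = w i.
Proof.
rewrite /fun_of_vec (bigD1 i) //= eqxx mul1r big1 ?addr0 // => j ji.
by case: eqP => [/nth_ks_inj eij|]; [rewrite eij eqxx in ji|rewrite mul0r].
Qed.

Lemma sum_ks (F : S -> R) : \sum_(x <- ks) F x = \sum_(j < k) F (e j).
Proof. by rewrite (big_nth x0) big_mkord. Qed.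

Lemma fundamental_mx_mulr (w : 'I_k -> R) i :
  \sum_j fundamental_mx i j * w j =
  w i - \sum_j G (e i) (e j) * w j + \sum_j p (e j) * w j.
Proof.
under eq_bigr do rewrite mxE !mulrDl mulNr.
rewrite !big_split /= sumrN; congr (_ - _ + _).
rewrite (bigD1 i) //= eqxx mul1r big1 ?addr0 // => j /negbTE.
by rewrite eq_sym => ->; rewrite mul0r.
Qed.

Lemma fundamental_mx_mull (w : 'I_k -> R) j :
  \sum_i w i * fundamental_mx i j =
  w j - \sum_i w i * G (e i) (e j) + (\sum_i w i) * p (e j).
Proof.
under eq_bigr do rewrite mxE !mulrDr mulrN.
rewrite !big_split /= sumrN -big_distrl; congr (_ - _ + _).
rewrite (bigD1 j) //= eqxx mulr1 big1 ?addr0 // => i /negbTE ->.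
by rewrite mulr0.
Qed.

Lemma fundamental_mx_unit : fundamental_mx \in unitmx.
Proof.
rewrite unitmxE unitfE -det_tr; apply/negP => /det0P [v vn0 vM].
apply: (negP vn0); apply/eqP.
have Mv : fundamental_mx *m v^T = 0 by rewrite -(trmxK fundamental_mx) -trmx_mul vM trmx0.
set U := fun_of_vec (fun j => v 0 j).
have kerU x : x \in ks ->
    U x - \sum_(y <- ks) G x y * U y + \sum_(y <- ks) p y * U y = 0.
  move=> xk; have [i <-] := ks_nth xk.
  rewrite !sum_ks /U fun_of_vec_nth.
  under eq_bigr do rewrite fun_of_vec_nth.
  under [X in _ + X]eq_bigr do rewrite fun_of_vec_nth.
  rewrite -fundamental_mx_mulr.
  transitivity ((fundamental_mx *m v^T) i 0); last by rewrite Mv mxE.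
  by rewrite [RHS]mxE; apply: eq_bigr => j _; rewrite [v^T _ _]mxE.
apply/rowP => j; rewrite mxE -(fun_of_vec_nth (fun j => v 0 j) j).
exact: (fundamental_ker0 kerU (mem_nth x0 (ltn_ord j))).
Qed.

Lemma fundamental_right_sol (g : S -> R) : exists U : S -> R, forall x, x \in ks ->
  U x - \sum_(y <- ks) G x y * U y + \sum_(y <- ks) p y * U y = g x.
Proof.
set u := invmx fundamental_mx *m \col_i g (e i).
have Mu : fundamental_mx *m u = \col_i g (e i).
  by rewrite /u mulmxA mulmxV ?fundamental_mx_unit // mul1mx.
exists (fun_of_vec (fun j => u j 0)) => x xk; have [i <-] := ks_nth xk.
rewrite !sum_ks fun_of_vec_nth.
under eq_bigr do rewrite fun_of_vec_nth.
under [X in _ + X]eq_bigr do rewrite fun_of_vec_nth.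
rewrite -fundamental_mx_mulr.
by transitivity ((fundamental_mx *m u) i 0); [rewrite [RHS]mxE|rewrite Mu mxE].
Qed.

Lemma fundamental_left_sol (g : S -> R) : exists V : S -> R, forall y, y \in ks ->
  V y - \sum_(x <- ks) V x * G x y + (\sum_(x <- ks) V x) * p y = g y.
Proof.
set v := \row_j g (e j) *m invmx fundamental_mx.
have vM : v *m fundamental_mx = \row_j g (e j).
  by rewrite /v -mulmxA mulVmx ?fundamental_mx_unit // mulmx1.
exists (fun_of_vec (fun j => v 0 j)) => y yk; have [j <-] := ks_nth yk.
rewrite !sum_ks fun_of_vec_nth.
under eq_bigr do rewrite fun_of_vec_nth.
under [X in _ + X * _]eq_bigr do rewrite fun_of_vec_nth.
rewrite -fundamental_mx_mull.
by transitivity ((v *m fundamental_mx) 0 j); [rewrite [RHS]mxE|rewrite vM mxE].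
Qed.

End fundamental_matrix.

Lemma poisson_right (g : S -> R) : \sum_(x <- ks) p x * g x = 0 ->
  exists u : S -> R, forall x, x \in ks -> u x - \sum_(y <- ks) G x y * u y = g x.
Proof.
case E: ks => [|x0 ?] pg0; first by exists g.
rewrite -E in pg0 *; have [U HU] := fundamental_right_sol x0 g.
set c := \sum_(y <- ks) p y * U y in HU.
suff c0 : c = 0 by exists U => x xk; rewrite -HU // c0 addr0.
have : \sum_(x <- ks) p x * (U x - \sum_(y <- ks) G x y * U y + c) = 0.
  by rewrite -[in RHS]pg0; apply: eq_big_seq => x xk; rewrite HU.
under eq_bigr do rewrite mulrDr mulrBr.
by rewrite big_split sumrB /= stationary_sum_mul -big_distrl /= p_sum1 mul1r subrr add0r.
Qed.

Lemma poisson_left (g : S -> R) : \sum_(y <- ks) g y = 0 ->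
  exists v : S -> R, forall y, y \in ks -> v y - \sum_(x <- ks) v x * G x y = g y.
Proof.
case E: ks => [|x0 ?] g0; first by exists g.
rewrite -E in g0 *; have [V HV] := fundamental_left_sol x0 g.
set d := \sum_(x <- ks) V x in HV.
suff d0 : d = 0 by exists V => y yk; rewrite -HV // d0 mul0r addr0.
rewrite -[RHS]g0 -(eq_big_seq _ HV) big_split big_split /= sumrN -big_distrr /=.
rewrite p_sum1 mulr1 exchange_big /=.
have -> : \sum_(x <- ks) \sum_(y <- ks) V x * G x y = d.
  rewrite /d big_seq [RHS]big_seq; apply: eq_bigr => x xk.
  by rewrite -big_distrr /= G_row // mulr1.
by rewrite subrr add0r.
Qed.


Lemma left_eigvec_deviation (mu : S -> R) (Q : S -> S -> R) (c : R) (u : S -> R) y0 :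
  y0 \in ks ->
  (forall x, x \in ks -> u x - \sum_(z <- ks) G x z * u z = (x == y0)%:R - p y0) ->
  \sum_(x <- ks) mu x = 1 ->
  (forall y, y \in ks -> \sum_(x <- ks) mu x * Q x y = c * mu y) ->
  mu y0 - p y0 = (\sum_(x <- ks) mu x * u x) * (1 - c)
     - \sum_(z <- ks) (\sum_(x <- ks) mu x * (G x z - Q x z)) * u z.
Proof.
move=> y0k hu mu1 hQ.
have -> : mu y0 - p y0 = \sum_(x <- ks) mu x * (u x - \sum_(z <- ks) G x z * u z).
  rewrite (eq_big_seq (fun x => mu x * ((x == y0)%:R - p y0))); last first.
    by move=> x xk; rewrite hu.
  under eq_bigr do rewrite mulrBr.
  by rewrite sumrB sum_seq_mul_delta // -big_distrl /= mu1 mul1r.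
under eq_bigr do rewrite mulrBr.
rewrite sumrB.
have -> : \sum_(x <- ks) mu x * \sum_(z <- ks) G x z * u z =
    c * (\sum_(x <- ks) mu x * u x) +
    \sum_(z <- ks) (\sum_(x <- ks) mu x * (G x z - Q x z)) * u z.
  transitivity (\sum_(z <- ks) (\sum_(x <- ks) mu x * G x z) * u z).
    under eq_bigr do rewrite big_distrr /=.
    rewrite exchange_big /=; apply: eq_bigr => z _.
    by rewrite big_distrl /=; apply: eq_bigr => x _; rewrite mulrA.
  rewrite big_distrr /= -big_split /=; apply: eq_big_seq => z zk.
  rewrite mulrA -hQ // -mulrDl -big_split /=; congr (_ * _).
  by apply: eq_bigr => x _; rewrite -mulrDr addrC subrK.
by rewrite mulrBr mulr1 opprD addrA [c * _]mulrC.
Qed.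

Lemma eigval_deviation (h : S -> R) (Q : S -> S -> R) (c : R) :
  \sum_(y <- ks) p y * h y = 1 ->
  (forall x, x \in ks -> \sum_(y <- ks) Q x y * h y = c * h x) ->
  1 - c = \sum_(x <- ks) p x * \sum_(y <- ks) (G x y - Q x y) * h y.
Proof.
move=> ph1 hQ.
have -> : c = \sum_(x <- ks) p x * \sum_(y <- ks) Q x y * h y.
  rewrite -[LHS]mulr1 -ph1 big_distrr /=; apply: eq_big_seq => x xk.
  by rewrite hQ // mulrCA.
rewrite -{1}ph1 -(stationary_sum_mul) -sumrB; apply: eq_bigr => x _.
by rewrite -mulrBr -sumrB; congr (_ * _); apply: eq_bigr => y _; rewrite mulrBl.
Qed.

Lemma right_eigvec_deviation (h : S -> R) (Q : S -> S -> R) (c : R) (v : S -> R) y0 :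
  y0 \in ks ->
  (forall y, y \in ks -> v y - \sum_(x <- ks) v x * G x y = (y == y0)%:R - p y) ->
  \sum_(y <- ks) p y * h y = 1 ->
  (forall x, x \in ks -> \sum_(y <- ks) Q x y * h y = c * h x) ->
  h y0 - 1 = \sum_(x <- ks) v x * (h x * (1 - c)
                - \sum_(z <- ks) (G x z - Q x z) * h z).
Proof.
move=> y0k hv ph1 hQ.
have -> : h y0 - 1 = \sum_(y <- ks) (v y - \sum_(x <- ks) v x * G x y) * h y.
  rewrite (eq_big_seq (fun y => ((y == y0)%:R - p y) * h y)); last first.
    by move=> y yk; rewrite hv.
  under eq_bigr do rewrite mulrBl.
  rewrite sumrB ph1 -(sum_seq_mul_delta h ks_uniq y0k).
  by congr (_ - _); apply: eq_bigr => y _; rewrite mulrC.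
under eq_bigr do rewrite mulrBl.
rewrite sumrB.
have -> : \sum_(y <- ks) (\sum_(x <- ks) v x * G x y) * h y =
    \sum_(x <- ks) v x * \sum_(y <- ks) G x y * h y.
  under eq_bigr do rewrite big_distrl /=.
  rewrite exchange_big /=; apply: eq_bigr => x _.
  by rewrite big_distrr /=; apply: eq_bigr => y _; rewrite mulrA.
rewrite -sumrB; apply: eq_big_seq => x xk; rewrite -mulrBr; congr (_ * _).
have -> : \sum_(y <- ks) G x y * h y =
    c * h x + \sum_(z <- ks) (G x z - Q x z) * h z.
  by rewrite -hQ // -big_split /=; apply: eq_bigr => y _; rewrite -mulrDl addrC subrK.
by rewrite mulrBr mulr1 opprD addrA [c * _]mulrC.
Qed.

Let poisson_delta_right y0 : y0 \in ks -> exists u : S -> R, forall x, x \in ks ->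
  u x - \sum_(z <- ks) G x z * u z = (x == y0)%:R - p y0.
Proof.
move=> y0k; apply: (poisson_right).
under eq_bigr do rewrite mulrBr.
by rewrite sumrB sum_seq_mul_delta // -big_distrl /= p_sum1 mul1r subrr.
Qed.

Let poisson_delta_left y0 : y0 \in ks -> exists v : S -> R, forall y, y \in ks ->
  v y - \sum_(x <- ks) v x * G x y = (y == y0)%:R - p y.
Proof.
move=> y0k; apply: (poisson_left).
have delta1 : \sum_(y <- ks) (y == y0)%:R = 1 :> R.
  rewrite -[RHS](sum_seq_mul_delta (fun=> 1) ks_uniq y0k).
  by apply: eq_bigr => y _; rewrite mul1r.
by rewrite sumrB p_sum1 delta1 subrr.
Qed.

Variables (Q : nat -> S -> S -> R) (c : nat -> R).
Hypothesis Q_cvg : forall x y, x \in ks -> y \in ks -> Q n x y @[n --> \oo] --> G x y.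

Let GQ_cvg0 x y : x \in ks -> y \in ks -> G x y - Q n x y @[n --> \oo] --> 0.
Proof.
move=> xk yk; rewrite -[X in _ --> X](subrr (G x y)).
by apply: cvgB_seq; [exact: cvg_cst|exact: Q_cvg].
Qed.

(* Pair mu_n - p with the solution u of the Poisson equation
   u - G u = 1_{y0} - p y0; the error terms are O(1 - c n) and O(G - Q n). *)
Lemma perturbed_left_eigvec_cvg (mu : nat -> S -> R) y0 : y0 \in ks ->
  (forall n x, x \in ks -> 0 <= mu n x) -> (forall n, \sum_(x <- ks) mu n x = 1) ->
  (forall n y, y \in ks -> \sum_(x <- ks) mu n x * Q n x y = c n * mu n y) ->
  c n @[n --> \oo] --> (1 : R) ->
  mu n y0 @[n --> \oo] --> p y0.
Proof.
move=> y0k mu0 mu1 muQ c1; have [u hu] := poisson_delta_right y0k.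
have mu_le1 n x : x \in ks -> `|mu n x| <= 1.
  move=> xk; rewrite ger0_norm ?mu0 // -(mu1 n).
  by apply: ler_sum_term_seq => // y yk; exact: mu0.
apply/subr_cvg0.
have -> : (fun n => mu n y0 - p y0) = fun n =>
    (\sum_(x <- ks) mu n x * u x) * (1 - c n)
    - \sum_(z <- ks) (\sum_(x <- ks) mu n x * (G x z - Q n x z)) * u z.
  by apply: funext => n; exact: left_eigvec_deviation y0k hu (mu1 _) (muQ _).
rewrite -[X in _ --> X](subr0 0); apply: cvgB_seq.
  apply: (@cvg_bounded_mul0 _ _ _ (\sum_(x <- ks) `|u x|)).
    move=> n; apply: le_trans (ler_norm_sum _ _ _) _.
    rewrite big_seq [leRHS]big_seq; apply: ler_sum => x xk.
    by rewrite normrM ler_piMl ?mu_le1.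
  by rewrite -[X in _ --> X](subrr 1); apply: cvgB_seq => //; exact: cvg_cst.
apply: cvg_sum_seq0 => z zk; rewrite -[X in _ --> X](mul0r (u z)).
apply: cvgM_seq; last exact: cvg_cst.
apply: cvg_sum_seq0 => x xk.
by apply: (cvg_bounded_mul0 (fun n => mu_le1 n x xk)); exact: GQ_cvg0.
Qed.

Section right_eigvec.
Variable h : nat -> S -> R.
Hypothesis h0 : forall n x, x \in ks -> 0 <= h n x.
Hypothesis ph1 : forall n, \sum_(y <- ks) p y * h n y = 1.
Hypothesis Qh : forall n x, x \in ks -> \sum_(y <- ks) Q n x y * h n y = c n * h n x.
Hypothesis p_gt0 : forall x, x \in ks -> 0 < p x.

Let h_bounded n x : x \in ks -> `|h n x| <= (p x)^-1.
Proof.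
move=> xk; rewrite ger0_norm ?h0 // -[(p x)^-1]mulr1 ler_pdivlMl ?p_gt0 // -(ph1 n).
apply: (ler_sum_term_seq (F := fun y => p y * h n y)) => // y yk.
by rewrite mulr_ge0 ?h0 ?ltW ?p_gt0.
Qed.

Let GQh_cvg0 x : x \in ks ->
  \sum_(y <- ks) (G x y - Q n x y) * h n y @[n --> \oo] --> 0.
Proof.
move=> xk; apply: cvg_sum_seq0 => y yk; under eq_cvg do rewrite mulrC.
by apply: (cvg_bounded_mul0 (fun n => h_bounded n yk)); exact: GQ_cvg0.
Qed.

Lemma perturbed_eigval_cvg : c n @[n --> \oo] --> (1 : R).
Proof.
apply/subr_cvg0; rewrite -[X in _ --> X]oppr0.
have -> : (fun n => c n - 1) = fun n =>
    - \sum_(x <- ks) p x * \sum_(y <- ks) (G x y - Q n x y) * h n y.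
  by apply: funext => n; rewrite -(eigval_deviation (ph1 n) (Qh n)) opprB.
apply: cvgN; apply: cvg_sum_seq0 => x xk; rewrite -[X in _ --> X](mulr0 (p x)).
by apply: cvgM_seq; [exact: cvg_cst|exact: GQh_cvg0].
Qed.

(* The same pairing, with the solution v of v - v G = 1_{y0} - p. *)
Lemma perturbed_right_eigvec_cvg y0 : y0 \in ks -> h n y0 @[n --> \oo] --> (1 : R).
Proof.
move=> y0k; have [v hv] := poisson_delta_left y0k.
apply/subr_cvg0; have -> : (fun n => h n y0 - 1) = fun n =>
    \sum_(x <- ks) v x * (h n x * (1 - c n) - \sum_(z <- ks) (G x z - Q n x z) * h n z).
  by apply: funext => n; exact: right_eigvec_deviation y0k hv (ph1 _) (Qh _).
apply: cvg_sum_seq0 => x xk; rewrite -[X in _ --> X](mulr0 (v x)).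
apply: cvgM_seq; first exact: cvg_cst.
rewrite -[X in _ --> X](subr0 0); apply: cvgB_seq; last exact: GQh_cvg0.
apply: (cvg_bounded_mul0 (fun n => h_bounded n xk)).
rewrite -[X in _ --> X](subrr 1).
by apply: cvgB_seq; [exact: cvg_cst|exact: perturbed_eigval_cvg].
Qed.

End right_eigvec.

End irreducible_stochastic_matrix.

Section truncation.
Context {R : realType} {S : countType} (P : S -> S -> R) (K : set S) (A : nat -> set S).
Hypothesis P0 : forall x y, 0 <= P x y.
Hypothesis A_mono : forall n, A n `<=` A n.+1.
Hypothesis A_cover : \bigcup_n A n = [set: S].
Local Open Scope ereal_scope.

Local Notation G := (Gker P [set: S] K).

Lemma avoid_paths_nondecreasing n : avoid_paths (A n) K `<=` avoid_paths (A n.+1) K.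
Proof.
move=> s As z zs; move: (As z zs); rewrite !in_setE => -[Anz nKz].
by split => //; exact: A_mono.
Qed.

Lemma avoid_paths_bigcup : avoid_paths [set: S] K = \bigcup_n avoid_paths (A n) K.
Proof.
apply/seteqP; split => [s /outKP outs|s [n _ As] z zs]; last first.
  by move: (As z zs); rewrite !in_setE => -[].
have [n An] : exists n, forall z, z \in s -> A n z.
  apply: nondecreasing_cover_seq => // z _.
  have [n _ Anz] : (\bigcup_n A n) z by rewrite A_cover.
  by exists n.
by exists n => // z zs; rewrite in_setE; split; [exact: An|exact: outs].
Qed.

Lemma killed_exp_cvg (r : S -> R) x : (forall y, (0 <= r y)%R) ->
  killed_exp P (A n) K r x @[n --> \oo] --> killed_exp P [set: S] K r x.
Proof.
move=> r0; rewrite /killed_exp avoid_paths_bigcup.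
apply: esum_bigcup_nondecreasing_cvg; first exact: avoid_paths_nondecreasing.
by move=> s; rewrite lee_fin mulr_ge0 ?pathw_ge0.
Qed.

Lemma Gker_cvg x y : Gker P (A n) K x y @[n --> \oo] --> G x y.
Proof.
rewrite /Gker avoid_paths_bigcup.
apply: esum_bigcup_nondecreasing_cvg; first exact: avoid_paths_nondecreasing.
by move=> s; exact: EFin_pathw_ge0.
Qed.


Lemma Gker_le_trace n x y : Gker P (A n) K x y <= G x y.
Proof.
rewrite /Gker [X in _ <= esum X _]avoid_paths_bigcup.
by apply: le_esum_subset => [|s _]; [move=> s As; exists n|exact: EFin_pathw_ge0].
Qed.

Lemma Gker_ge0 B x y : 0 <= Gker P B K x y.
Proof. by apply: esum_ge0 => s _; exact: EFin_pathw_ge0. Qed.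

End truncation.

Section trace_on_K.
Context {R : realType} {S : countType} (P : S -> S -> R) (K : set S) (pi : S -> R).
Context (A : nat -> set S).
Hypothesis P0 : forall x y, 0 <= P x y.
Hypothesis P_row : forall x, (\esum_(y in [set: S]) (P x y)%:E = 1)%E.
Hypothesis P_irr : irreducible P.
Hypothesis P_rec : positive_recurrent P.
Hypothesis pi0 : forall x, 0 <= pi x.
Hypothesis pi_sum1 : (\esum_(x in [set: S]) (pi x)%:E = 1)%E.
Hypothesis pi_stat : forall y, (\esum_(x in [set: S]) (pi x * P x y)%:E = (pi y)%:E)%E.
Hypothesis K_fin : finite_set K.
Variable k0 : S.
Hypothesis K_k0 : K k0.
Hypothesis A_mono : forall n, A n `<=` A n.+1.
Hypothesis A_cover : \bigcup_n A n = [set: S].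

Local Notation G := (Gker P [set: S] K).

Definition Kseq := finmap.enum_fset (fset_set K).

Lemma mem_Kseq x : x \in Kseq <-> K x.
Proof.
split => [xK|/mem_set]; last by rewrite -(in_fset_set K_fin x).
by apply: set_mem; rewrite -(in_fset_set K_fin x).
Qed.

Lemma Kseq_uniq : uniq Kseq.
Proof. exact: finmap.fset_uniq. Qed.

Lemma esum_Kseq (f : S -> \bar R) : (forall x, K x -> 0 <= f x)%E ->
  \esum_(x in K) f x = \sum_(x <- Kseq) f x.
Proof.
move=> f0; rewrite esum_fset ?fsbig_finite // => x; rewrite inE; exact: f0.
Qed.

Lemma esum_KseqR (f : S -> R) : (forall x, K x -> 0 <= f x) ->
  \esum_(x in K) (f x)%:E = (\sum_(x <- Kseq) f x)%:E.
Proof. by move=> f0; rewrite esum_Kseq ?sumEFin // => x Kx; rewrite lee_fin f0. Qed.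

Definition Gtrace x y := fine (G x y).

Lemma trace_le1 x y : K x -> K y -> (G x y <= 1)%E.
Proof.
move=> Kx Ky; rewrite -(trace_row P0 P_row P_rec Kx).
by apply: (esum_ge_term (D := K)) => // *; exact: trace_ge0.
Qed.

Lemma GtraceE x y : K x -> K y -> (Gtrace x y)%:E = G x y.
Proof.
move=> Kx Ky; rewrite fineK // ge0_fin_numE ?trace_ge0 //.
exact: le_lt_trans (trace_le1 Kx Ky) (ltry 1).
Qed.

Lemma Gtrace_ge0 x y : 0 <= Gtrace x y.
Proof. by apply: fine_ge0; exact: trace_ge0. Qed.

Lemma Gtrace_row x : K x -> \sum_(y <- Kseq) Gtrace x y = 1.
Proof.
move=> Kx; have := trace_row P0 P_row P_rec Kx.
rewrite esum_Kseq => [|y _]; last exact: trace_ge0.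
rewrite big_seq (eq_bigr (fun y => (Gtrace x y)%:E)) => [|y /mem_Kseq Ky]; last first.
  by rewrite GtraceE.
by rewrite -big_seq sumEFin => -[].
Qed.

Lemma Gker_fin n x y : K x -> K y -> Gker P (A n) K x y \is a fin_num.
Proof.
move=> Kx Ky; rewrite ge0_fin_numE ?Gker_ge0 //.
apply: le_lt_trans (Gker_le_trace K P0 A_mono A_cover n x y) _.
exact: le_lt_trans (trace_le1 Kx Ky) (ltry 1).
Qed.

Lemma Gmat_le_Gtrace n x y : K x -> K y -> 0 <= Gmat P (A n) K x y <= Gtrace x y.
Proof.
move=> Kx Ky; rewrite fine_ge0 ?Gker_ge0 //= -lee_fin GtraceE // fineK ?Gker_fin //.
exact: Gker_le_trace.
Qed.

Lemma Gmat_cvg x y : K x -> K y -> Gmat P (A n) K x y @[n --> \oo] --> Gtrace x y.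
Proof. by move=> Kx Ky; apply: fine_cvg; rewrite GtraceE //; exact: Gker_cvg. Qed.

Lemma Gtrace_irr : irreducible_on K (Gmat P (A 0) K) ->
  forall x y, x \in Kseq -> y \in Kseq -> exists s : seq S,
    (forall z, z \in s -> z \in Kseq) /\ last x s = y /\ 0 < pathw Gtrace x s.
Proof.
move=> G0_irr x y /mem_Kseq Kx /mem_Kseq Ky.
have [s [_ [sK [lst pos]]]] := G0_irr x y Kx Ky.
exists s; split => [z /sK /mem_Kseq //|]; split => //.
have /andP[_ le] := pathw_le_in (@Gmat_le_Gtrace 0) Kx sK.
exact: lt_le_trans pos le.
Qed.

Definition piK := \sum_(x <- Kseq) pi x.

Definition pi_K x := pi x / piK.

Lemma piK_gt0 : 0 < piK.
Proof.
rewrite /piK (bigD1_seq k0) ?Kseq_uniq //=; last exact/mem_Kseq.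
by rewrite ltr_wpDr ?sumr_ge0 // (stationary_gt0 P0 pi0 pi_stat pi_sum1 P_irr).
Qed.

Lemma pi_K_gt0 x : 0 < pi_K x.
Proof. by rewrite divr_gt0 ?piK_gt0 // (stationary_gt0 P0 pi0 pi_stat pi_sum1 P_irr). Qed.

Lemma pi_K_sum1 : \sum_(x <- Kseq) pi_K x = 1.
Proof. by rewrite -big_distrl /= divff // lt0r_neq0 // piK_gt0. Qed.

Lemma pi_K_stationary y : K y -> \sum_(x <- Kseq) pi_K x * Gtrace x y = pi_K y.
Proof.
move=> Ky; have := trace_stationary P0 pi0 pi_stat P_row P_rec pi_sum1 Ky.
rewrite esum_Kseq => [|x _]; last by rewrite mule_ge0 ?lee_fin ?trace_ge0.
rewrite big_seq (eq_bigr (fun x => (pi x * Gtrace x y)%:E)); last first.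
  by move=> x /mem_Kseq Kx; rewrite EFinM GtraceE.
rewrite -big_seq sumEFin => -[piG].
by rewrite /pi_K -piG big_distrl /=; apply: eq_bigr => x _; rewrite mulrAC.
Qed.

End trace_on_K.

Lemma cvge_div_pos {R : realType} (u v : nat -> \bar R) (a : \bar R) (b : R) :
  0 < b -> u n @[n --> \oo] --> a -> v n @[n --> \oo] --> b%:E ->
  (u n / v n)%E @[n --> \oo] --> (a * b^-1%:E)%E.
Proof.
move=> b0 ua vb; have vfin := cvg_is_fine vb.
have fv : fine \o v @ \oo --> b by exact: fine_cvg.
have vpos : \forall n \near \oo, 0 < fine (v n) by exact: cvgr_gt b fv 0 b0.
suff main : (u n * ((fine (v n))^-1)%:E)%E @[n --> \oo] --> (a * b^-1%:E)%E.
  apply: (cvg_trans _ main); apply: near_eq_cvg; near=> n; congr (_ * _)%E.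
  have vn0 : fine (v n) != 0 by apply: lt0r_neq0; near: n.
  have vnfin : v n \is a fin_num by near: n.
  by rewrite -[in RHS](fineK vnfin) inver (negbTE vn0).
apply: cvgeM; last by apply: cvg_EFin; [exact: nearW|apply: cvgV; rewrite ?gt_eqF].
have [afin|ainf] := boolP (a \is a fin_num); first exact: mule_def_fin.
by rewrite mule_defC; apply: mule_def_neq0_infty => //; rewrite eqe invr_eq0 gt_eqF.
Unshelve. all: by end_near.
Qed.

Section limits.
Context {R : realType} {S : countType} (P : S -> S -> R) (K : set S) (pi : S -> R).
Context (A : nat -> set S).
Hypothesis P0 : forall x y, 0 <= P x y.
Hypothesis P_row : forall x, (\esum_(y in [set: S]) (P x y)%:E = 1)%E.
Hypothesis P_irr : irreducible P.
Hypothesis P_rec : positive_recurrent P.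
Hypothesis pi0 : forall x, 0 <= pi x.
Hypothesis pi_sum1 : (\esum_(x in [set: S]) (pi x)%:E = 1)%E.
Hypothesis pi_stat : forall y, (\esum_(x in [set: S]) (pi x * P x y)%:E = (pi y)%:E)%E.
Hypothesis K_fin : finite_set K.
Variable k0 : S.
Hypothesis K_k0 : K k0.
Hypothesis A_mono : forall n, A n `<=` A n.+1.
Hypothesis A_cover : \bigcup_n A n = [set: S].

Local Notation ks := (Kseq K).
Local Notation pK := (pi_K K pi).
Local Notation Gt := (Gtrace P K).
Local Notation Gn n := (Gmat P (A n) K).

Let mem_ks := mem_Kseq K_fin.

Lemma killed_mean_cvg (mu : nat -> S -> R) (r : S -> R) : (forall y, 0 <= r y) ->
  (forall n x, K x -> 0 <= mu n x) -> (forall y, K y -> mu n y @[n --> \oo] --> pK y) ->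
  (\esum_(x in K) ((mu n x)%:E * killed_exp P (A n) K r x) @[n --> \oo] -->
   ((piK K pi)^-1)%:E * \esum_(y in [set: S]) ((pi y * r y)%R)%:E)%E.
Proof.
move=> r0 mu0 mu_cvg.
have killed0 B x : (0 <= killed_exp P B K r x)%E.
  by apply: esum_ge0 => s _; rewrite lee_fin mulr_ge0 ?pathw_ge0.
rewrite -(cycle_formula P0 pi0 pi_stat P_row P_rec pi_sum1 P_irr K_k0 r0).
rewrite esum_Kseq // => [|x _]; last by rewrite mule_ge0 ?lee_fin.
rewrite ge0_sume_distrr => [|x _]; last by rewrite mule_ge0 ?lee_fin.
have -> : (fun n => \esum_(x in K) ((mu n x)%:E * killed_exp P (A n) K r x)%E) =
    fun n => (\sum_(x <- ks | x \in ks) (mu n x)%:E * killed_exp P (A n) K r x)%E.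
  apply: funext => n; rewrite -big_seq esum_Kseq // => x Kx.
  by rewrite mule_ge0 ?lee_fin ?mu0.
rewrite big_seq; apply: cvg_nnesum => x /mem_ks Kx.
  by apply: nearW => n; rewrite mule_ge0 ?lee_fin ?mu0.
rewrite muleA -EFinM (mulrC _^-1) -/(pK x); apply: cvgeM.
- have [fin|nfin] := boolP (killed_exp P [set: S] K r x \is a fin_num).
    exact: mule_def_fin.
  apply: mule_def_neq0_infty => //.
  by rewrite eqe lt0r_neq0 // (pi_K_gt0 P0 P_irr pi0 pi_sum1 pi_stat K_fin K_k0).
- by apply: cvg_EFin; [exact: nearW|exact: mu_cvg].
- exact: killed_exp_cvg.
Qed.

Lemma tilde_pi_cvg (mu : nat -> S -> R) (r : S -> R) : (forall y, 0 <= r y) ->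
  (forall n x, K x -> 0 <= mu n x) -> (forall y, K y -> mu n y @[n --> \oo] --> pK y) ->
  tilde_pi P (A n) K (mu n) r @[n --> \oo] --> \esum_(y in [set: S]) ((pi y * r y)%R)%:E.
Proof.
move=> r0 mu0 mu_cvg.
have piK0 := piK_gt0 P0 P_irr pi0 pi_sum1 pi_stat K_fin K_k0.
have num := killed_mean_cvg r0 mu0 mu_cvg.
have den := killed_mean_cvg (fun=> ler01) mu0 mu_cvg.
have pi1 : \esum_(y in [set: S]) ((pi y * 1)%R)%:E = 1%E.
  by rewrite -pi_sum1; apply: eq_esum => y _; rewrite mulr1.
rewrite pi1 mule1 in den.
have piKV0 : 0 < (piK K pi)^-1 by rewrite invr_gt0.
have := cvge_div_pos piKV0 num den.
by rewrite muleAC -EFinM mulfV ?invr_eq0 ?lt0r_neq0 // mul1e.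
Qed.

Hypothesis G0_irr : irreducible_on K (Gmat P (A 0) K).

Let ks_uniq : uniq ks := Kseq_uniq K.
Let Gt0 x y : x \in ks -> y \in ks -> 0 <= Gt x y.
Proof. by move=> *; exact: Gtrace_ge0. Qed.
Let Gt_row x : x \in ks -> \sum_(y <- ks) Gt x y = 1.
Proof. by move=> /mem_ks; exact: Gtrace_row. Qed.
Let Gt_irr := Gtrace_irr P0 P_row P_rec K_fin A_mono A_cover G0_irr.
Let pK_stat y : y \in ks -> \sum_(x <- ks) pK x * Gt x y = pK y.
Proof. by move=> /mem_ks; exact: pi_K_stationary. Qed.
Let pK_sum1 := pi_K_sum1 P0 P_irr pi0 pi_sum1 pi_stat K_fin K_k0.
Let pK_gt0 x (_ : x \in ks) := pi_K_gt0 P0 P_irr pi0 pi_sum1 pi_stat K_fin K_k0 x.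
Let Gn_cvg x y : x \in ks -> y \in ks -> Gn n x y @[n --> \oo] --> Gt x y.
Proof. by move=> /mem_ks Kx /mem_ks Ky; exact: Gmat_cvg. Qed.

Let esum_KseqE (f : S -> R) (c : R) : (forall x, K x -> 0 <= f x) ->
  (\esum_(x in K) (f x)%:E = c%:E)%E -> \sum_(x <- ks) f x = c.
Proof. by move=> f0; rewrite esum_KseqR // => -[]. Qed.

Lemma Gmat_row_sum n x : K x ->
  fine (\esum_(y in K) Gker P (A n) K x y) = \sum_(y <- ks) Gn n x y.
Proof.
move=> Kx; rewrite esum_Kseq // => [|y _]; last exact: Gker_ge0.
rewrite big_seq (eq_bigr (fun y => (Gn n x y)%:E)) => [|y /mem_ks Ky]; last first.
  by rewrite /Gmat fineK // Gker_fin.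
by rewrite -big_seq sumEFin.
Qed.

Lemma P2mat_cvg x y : K x -> K y -> P2mat P (A n) K x y @[n --> \oo] --> Gt x y.
Proof.
move=> Kx Ky; have /mem_ks xk := Kx.
have -> : (fun n => P2mat P (A n) K x y) =
    fun n => Gn n x y * (\sum_(z <- ks) Gn n x z)^-1.
  by apply: funext => n; rewrite /P2mat Gmat_row_sum.
rewrite -[X in _ --> X]mulr1 -[X in _ * X]invr1 -[X in _ * X^-1](Gt_row xk).
apply: cvgM_seq; first exact: Gmat_cvg.
apply: cvgV; first by rewrite Gt_row ?oner_neq0.
by apply: cvg_sum_seq => z zk; exact: Gn_cvg.
Qed.

Lemma row_normalized_stationary_cvg (pi2 : nat -> S -> R) :
  (forall n, stationary_on K (P2mat P (A n) K) (pi2 n)) ->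
  forall y, K y -> pi2 n y @[n --> \oo] --> pK y.
Proof.
move=> pi2_stat y /mem_ks yk.
have P2_ge0 n x z : 0 <= P2mat P (A n) K x z.
  by rewrite divr_ge0 ?fine_ge0 ?Gker_ge0 // esum_ge0 // => *; exact: Gker_ge0.
apply: (perturbed_left_eigvec_cvg ks_uniq Gt0 Gt_row Gt_irr pK_stat pK_sum1
  (Q := fun n => P2mat P (A n) K) (c := fun=> 1) _ yk).
- by move=> x z /mem_ks Kx /mem_ks Kz; exact: P2mat_cvg.
- by move=> n x /mem_ks Kx; have [pi20 _] := pi2_stat n; exact: pi20.
- by move=> n; have [pi20 [pi2_1 _]] := pi2_stat n; exact: esum_KseqE.
- move=> n z /mem_ks Kz; have [pi20 [_ pi2P]] := pi2_stat n.
  by rewrite mul1r; apply: esum_KseqE (pi2P z Kz) => x Kx; rewrite mulr_ge0 ?pi20 ?P2_ge0.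
- exact: cvg_cst.
Qed.

Section perron.
Variables (lam : nat -> R) (h nu : nat -> S -> R).
Hypothesis hnu_gt0 : forall n x, K x -> 0 < h n x /\ 0 < nu n x.
Hypothesis nuG : forall n y, K y ->
  (\esum_(x in K) (nu n x * Gn n x y)%:E = (lam n * nu n y)%:E)%E.
Hypothesis Gh : forall n x, K x ->
  (\esum_(y in K) (Gn n x y * h n y)%:E = (lam n * h n x)%:E)%E.
Hypothesis nuh1 : forall n, (\esum_(x in K) (nu n x * h n x)%:E = 1)%E.

Let Gn_ge0 n x y : 0 <= Gn n x y.
Proof. exact/fine_ge0/Gker_ge0. Qed.

Let h_gt0 n x : x \in ks -> 0 < h n x.
Proof. by move=> /mem_ks Kx; case: (hnu_gt0 n Kx). Qed.
Let nu_gt0 n x : x \in ks -> 0 < nu n x.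
Proof. by move=> /mem_ks Kx; case: (hnu_gt0 n Kx). Qed.

Let sum_gt0 (F : S -> R) : (forall x, x \in ks -> 0 < F x) -> 0 < \sum_(x <- ks) F x.
Proof.
move=> F0; have k0k : k0 \in ks by exact/mem_ks.
apply: lt_le_trans (F0 _ k0k) _; apply: ler_sum_term_seq => // x xk.
exact: ltW (F0 _ xk).
Qed.

Let nu_sum_gt0 n : 0 < \sum_(z <- ks) nu n z.
Proof. exact: sum_gt0 (nu_gt0 n). Qed.
Let pKh_sum_gt0 n : 0 < \sum_(z <- ks) pK z * h n z.
Proof. by apply: sum_gt0 => z zk; rewrite mulr_gt0 ?pK_gt0 ?h_gt0. Qed.

(* Rescaling nu_n and h_n leaves nu_n y h_n y / sum_x nu_n x h_n x unchanged,
   and that denominator is 1. *)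
Let nu' n x := nu n x / \sum_(z <- ks) nu n z.
Let h' n x := h n x / \sum_(z <- ks) pK z * h n z.

Let nuG' n y : y \in ks -> \sum_(x <- ks) nu' n x * Gn n x y = lam n * nu' n y.
Proof.
move=> /mem_ks Ky; under eq_bigr do rewrite /nu' mulrAC.
rewrite -big_distrl /= mulrA; congr (_ * _); apply: esum_KseqE (nuG n Ky) => x Kx.
by have [_ nu0] := hnu_gt0 n Kx; rewrite mulr_ge0 ?Gn_ge0 // ltW.
Qed.

Let Gh' n x : x \in ks -> \sum_(y <- ks) Gn n x y * h' n y = lam n * h' n x.
Proof.
move=> /mem_ks Kx; under eq_bigr do rewrite /h' mulrA.
rewrite -big_distrl /= mulrA; congr (_ * _); apply: esum_KseqE (Gh n Kx) => y Ky.
by have [h0 _] := hnu_gt0 n Ky; rewrite mulr_ge0 ?Gn_ge0 // ltW.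
Qed.

Let nu'_sum1 n : \sum_(x <- ks) nu' n x = 1.
Proof. by rewrite /nu' -big_distrl /= divff // gt_eqF ?nu_sum_gt0. Qed.

Let pK_h'1 n : \sum_(y <- ks) pK y * h' n y = 1.
Proof.
under eq_bigr do rewrite /h' mulrA.
by rewrite -big_distrl /= divff // gt_eqF ?pKh_sum_gt0.
Qed.

Let h'_ge0 n x : x \in ks -> 0 <= h' n x.
Proof. by move=> xk; rewrite divr_ge0 ?ltW ?h_gt0 ?pKh_sum_gt0. Qed.

Let lam_cvg : lam n @[n --> \oo] --> (1 : R).
Proof.
exact: (perturbed_eigval_cvg ks_uniq pK_stat Gn_cvg (c := lam) h'_ge0 pK_h'1 Gh' pK_gt0).
Qed.

Let h'_cvg y : y \in ks -> h' n y @[n --> \oo] --> (1 : R).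
Proof.
exact: (perturbed_right_eigvec_cvg ks_uniq Gt0 Gt_row Gt_irr pK_stat pK_sum1 Gn_cvg
  (c := lam) h'_ge0 pK_h'1 Gh' pK_gt0).
Qed.

Let nu'_cvg y : y \in ks -> nu' n y @[n --> \oo] --> pK y.
Proof.
move=> yk; apply: (perturbed_left_eigvec_cvg ks_uniq Gt0 Gt_row Gt_irr pK_stat pK_sum1
  Gn_cvg (c := lam) yk _ nu'_sum1 nuG' lam_cvg).
by move=> n x xk; rewrite divr_ge0 ?ltW ?nu_gt0 ?nu_sum_gt0.
Qed.

Lemma perron_stationary_cvg y : K y -> nu n y * h n y @[n --> \oo] --> pK y.
Proof.
move=> /mem_ks yk.
have nuh1' n : \sum_(x <- ks) nu n x * h n x = 1.
  by apply: esum_KseqE (nuh1 n) => x /mem_ks xk; rewrite mulr_ge0 ?ltW ?nu_gt0 ?h_gt0.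
have -> : (fun n => nu n y * h n y) =
    fun n => nu' n y * h' n y / \sum_(x <- ks) nu' n x * h' n x.
  apply: funext => n.
  have st0 : (\sum_(z <- ks) nu n z) * (\sum_(z <- ks) pK z * h n z) != 0.
    by rewrite mulf_neq0 ?gt_eqF ?nu_sum_gt0 ?pKh_sum_gt0.
  have nuh' x : nu' n x * h' n x = nu n x * h n x / ((\sum_(z <- ks) nu n z) *
      (\sum_(z <- ks) pK z * h n z)) by rewrite mulrACA invfM.
  under eq_bigr do rewrite nuh'.
  by rewrite nuh' -big_distrl /= nuh1' mul1r invrK divfK.
have pK1 : \sum_(x <- ks) pK x * 1 = 1 by under eq_bigr do rewrite mulr1.
suff : nu' n y * h' n y / \sum_(x <- ks) nu' n x * h' n x @[n --> \oo] -->
    pK y * 1 / \sum_(x <- ks) pK x * 1 by rewrite pK1 divr1 mulr1.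
apply: cvgM_seq; first by apply: cvgM_seq; [exact: nu'_cvg|exact: h'_cvg].
apply: cvgV; first by rewrite pK1 oner_neq0.
apply: cvg_sum_seq => x xk; apply: cvgM_seq; [exact: nu'_cvg|exact: h'_cvg].
Qed.

End perron.

End limits.

Unset Implicit Arguments. Set Strict Implicit. Set Printing Implicit Defensive.

Theorem proposition2p4 (R : realType) (S : countType) (P : S -> S -> R)
  (pi : S -> R) (K : set S) (A : nat -> set S)
  (lam : nat -> R) (h nu : nat -> S -> R) (pi2 : nat -> S -> R) (r : S -> R) :
  stochastic P -> irreducible P -> positive_recurrent P ->
  stationary_distribution P pi ->
  finite_set K -> K !=set0 ->
  (forall n, finite_set (A n)) -> (forall n, K `<=` A n) ->
  (forall n, A n `<=` A n.+1) -> \bigcup_n A n = [set: S] ->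
  (forall n, irreducible_on K (Gmat P (A n) K)) ->
  (* Perron data of G_n *)
  (forall n, 0 < lam n) ->
  (forall n x, K x -> 0 < h n x /\ 0 < nu n x) ->
  (forall n y, K y ->
     (\esum_(x in K) (nu n x * Gmat P (A n) K x y)%:E = (lam n * nu n y)%:E)%E) ->
  (forall n x, K x ->
     (\esum_(y in K) (Gmat P (A n) K x y * h n y)%:E = (lam n * h n x)%:E)%E) ->
  (forall n, (\esum_(x in K) (nu n x * h n x)%:E = 1)%E) ->
  (* pi_{2,n} is the stationary distribution of P_{2,n} *)
  (forall n, stationary_on K (P2mat P (A n) K) (pi2 n)) ->
  (forall x, 0 <= r x) ->
  (tilde_pi P (A n) K (fun x => nu n x * h n x) r @[n --> \oo] -->
     (\esum_(x in [set: S]) (pi x * r x)%:E)%E) /\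
  (tilde_pi P (A n) K (pi2 n) r @[n --> \oo] -->
     (\esum_(x in [set: S]) (pi x * r x)%:E)%E).
Proof.
move=> [P0 P_row] P_irr P_rec [pi0 [pi_sum1 pi_stat]] K_fin [k0 K_k0] _ _ A_mono A_cover
  G_irr _ hnu_gt0 nuG Gh nuh1 pi2_stat r0.
have tilde_cvg mu := tilde_pi_cvg P0 P_row P_irr P_rec pi0 pi_sum1 pi_stat K_fin K_k0
  A_mono A_cover (mu := mu) r0.
split; [apply: (tilde_cvg (fun n x => nu n x * h n x))|apply: tilde_cvg].
- by move=> n x Kx; have [h0 nu0] := hnu_gt0 n x Kx; rewrite mulr_ge0 ?ltW.
- move=> y Ky; exact: (perron_stationary_cvg P0 P_row P_irr P_rec pi0 pi_sum1 pi_stat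
    K_fin K_k0 A_mono A_cover (G_irr 0%N) hnu_gt0 nuG Gh nuh1 Ky).
- by move=> n x Kx; have [pi20 _] := pi2_stat n; exact: pi20.
- move=> y Ky; exact: (row_normalized_stationary_cvg P0 P_row P_irr P_rec pi0 pi_sum1
    pi_stat K_fin K_k0 A_mono A_cover (G_irr 0%N) pi2_stat Ky).
Qed.
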